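(* Let $N\ge 2$ and consider the slotted-ALOHA game among $N$ players in which player $i$ chooses $q_i\in(0,1)$ and has net utility $$V_i(\underline{q})=C\log\gamma_i(\underline{q})+A\,\alpha_i(\underline{q}_{-i})\,\overline{\gamma}_{-i}(\underline{q})-M q_i,$$ where $\gamma_i(\underline{q})=q_i\prod_{j\ne i}(1-q_j)$, $\alpha_i(\underline{q}_{-i})=\prod_{j\ne i}(1-q_j)$, $\overline{\gamma}_{-i}(\underline{q})=\frac{1}{N-1}\sum_{j\ne i}\gamma_j(\underline{q})$, and all players have the same parameters $C,M>0$, $A\ge 0$. Let $q^*\underline{1}$, $0<q^*<1$, be a symmetric Nash equilibrium of this game. If $$C>2(N-1)A,$$ then $q^*\underline{1}$ is a locally asymptotically stable equilibrium of the continuous-time dynamics $$\dot q_i(t)=\frac{\partial V_i}{\partial q_i}(\underline{q}(t)),\qquad i=1,\dots,N.$$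
   Context: $\underline{q}=(q_1,\dots,q_N)$ is the profile of access probabilities and $\underline{q}_{-i}$ the profile of players other than $i$; $\underline{1}$ is the all-ones vector in $\mathbb{R}^N$. A Nash equilibrium is a profile $\underline{q}^*$ such that for each $i$, $q_i^*$ maximizes $V_i(q_i;\underline{q}^*_{-i})$ over $q_i$; it is symmetric if all coordinates are equal. *)

From Stdlib Require Import Reals Lra.
From Coquelicot Require Import Coquelicot.
Open Scope R_scope.

(* Profiles q are functions nat -> R; only the coordinates 0..N-1 matter
   (players are indexed 0..N-1). *)

Fixpoint prod_upto (n : nat) (f : nat -> R) : R :=
  match n with O => 1 | S n' => prod_upto n' f * f n' end.

Fixpoint sum_upto (n : nat) (f : nat -> R) : R :=
  match n with O => 0 | S n' => sum_upto n' f + f n' end.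

Definition alpha (N : nat) (q : nat -> R) (i : nat) : R :=
  prod_upto N (fun j => if Nat.eqb j i then 1 else 1 - q j).

Definition gamma (N : nat) (q : nat -> R) (i : nat) : R :=
  q i * alpha N q i.

Definition gammabar (N : nat) (q : nat -> R) (i : nat) : R :=
  / (INR N - 1) * sum_upto N (fun j => if Nat.eqb j i then 0 else gamma N q j).

Definition V (N : nat) (C A M : R) (q : nat -> R) (i : nat) : R :=
  C * ln (gamma N q i) + A * alpha N q i * gammabar N q i - M * q i.

Definition upd (q : nat -> R) (i : nat) (x : R) : nat -> R :=
  fun j => if Nat.eqb j i then x else q j.

Definition field (N : nat) (C A M : R) (q : nat -> R) (i : nat) : R :=
  Derive (fun x => V N C A M (upd q i x) i) (q i).

Definition in_box (N : nat) (q : nat -> R) : Prop :=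
  forall i, (i < N)%nat -> 0 < q i < 1.

Definition sym_profile (c : R) : nat -> R := fun _ => c.

Definition is_Nash (N : nat) (C A M : R) (q : nat -> R) : Prop :=
  in_box N q /\
  forall i, (i < N)%nat -> forall x, 0 < x < 1 ->
    V N C A M (upd q i x) i <= V N C A M q i.

Definition near_lt (N : nat) (x y : nat -> R) (e : R) : Prop :=
  forall i, (i < N)%nat -> Rabs (x i - y i) < e.

Definition is_solution (N : nat) (F : (nat -> R) -> nat -> R)
    (x : R -> nat -> R) (T : Rbar) : Prop :=
  (forall t, 0 <= t -> Rbar_lt t T -> in_box N (x t)) /\
  forall i, (i < N)%nat ->
    filterlim (fun s => x s i) (at_right 0) (locally (x 0 i)) /\
    (forall t, 0 < t -> Rbar_lt t T -> is_derive (fun s => x s i) t (F (x t) i)).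

(* Lyapunov stability (including existence of global solutions from nearby
   initial data) *)
Definition lyap_stable (N : nat) (F : (nat -> R) -> nat -> R)
    (qe : nat -> R) : Prop :=
  forall eps, 0 < eps -> exists delta, 0 < delta /\
    (forall x0, near_lt N x0 qe delta ->
       exists x, is_solution N F x p_infty /\
                 forall i, (i < N)%nat -> x 0 i = x0 i) /\
    (forall (T : Rbar) x, is_solution N F x T -> near_lt N (x 0) qe delta ->
       forall t, 0 <= t -> Rbar_lt t T -> near_lt N (x t) qe eps).

Definition loc_attractive (N : nat) (F : (nat -> R) -> nat -> R)
    (qe : nat -> R) : Prop :=
  exists delta, 0 < delta /\
    forall x, is_solution N F x p_infty -> near_lt N (x 0) qe delta ->
      forall i, (i < N)%nat -> is_lim (fun t => x t i) p_infty (qe i).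

Definition loc_asympt_stable (N : nat) (F : (nat -> R) -> nat -> R)
    (qe : nat -> R) : Prop :=
  lyap_stable N F qe /\ loc_attractive N F qe.

From Stdlib Require Import Reals Lra Lia FunctionalExtensionality.
From Coquelicot Require Import Coquelicot.
Open Scope R_scope.

(* Let W(q) = sum_i (q_i - qs)^2. The best-response derivative is
   dV_i/dq_i = C/q_i - M - A/(N-1) sum_{j<>i} alpha_i gamma_j/(1 - q_i); it vanishes at
   the interior Nash equilibrium qs 1, its private part C/q_i is decreasing, and its
   cooperative part is 2(N-1)-Lipschitz in q_{-i} on the cube. Subtracting the value at
   qs 1 and using 2|e_i||e_k| <= e_i^2 + e_k^2 gives, on (0,1)^N,
     sum_i (q_i - qs) dV_i/dq_i (q) <= -(C/qs - 2(N-1)A) W(q),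
   and the rate is positive when C > 2(N-1)A. Hence W decays exponentially along every
   solution, which yields stability and attractivity. Solutions from points near qs 1
   exist for all times: Picard iteration applies to the field evaluated at the
   projection onto a small cube around qs 1 (bounded and globally Lipschitz), and by the
   same dissipation estimate its solutions never leave the region where the projection
   is the identity. *)

(** * Finite sums and products *)

Lemma sum_upto_ext n f g :
  (forall k, (k < n)%nat -> f k = g k) -> sum_upto n f = sum_upto n g.
Proof.
  induction n as [|n IH]; intros H; simpl; auto.
  rewrite IH by (intros; apply H; lia). rewrite H by lia. auto.
Qed.

Lemma sum_upto_scal_l n c f : sum_upto n (fun k => c * f k) = c * sum_upto n f.
Proof. induction n; simpl; [ring|]. rewrite IHn; ring. Qed.

Lemma sum_upto_plus n f g :
  sum_upto n (fun k => f k + g k) = sum_upto n f + sum_upto n g.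
Proof. induction n; simpl; [ring|]. rewrite IHn; ring. Qed.

Lemma sum_upto_minus n f g :
  sum_upto n (fun k => f k - g k) = sum_upto n f - sum_upto n g.
Proof. induction n; simpl; [ring|]. rewrite IHn; ring. Qed.

Lemma sum_upto_const n c : sum_upto n (fun _ => c) = INR n * c.
Proof. induction n; [simpl; ring|]. cbn [sum_upto]. rewrite IHn, S_INR; ring. Qed.

Lemma sum_upto_le n f g :
  (forall k, (k < n)%nat -> f k <= g k) -> sum_upto n f <= sum_upto n g.
Proof.
  induction n as [|n IH]; intros H; simpl; [lra|].
  assert (f n <= g n) by (apply H; lia).
  assert (sum_upto n f <= sum_upto n g) by (apply IH; intros; apply H; lia).
  lra.
Qed.

Lemma sum_upto_nonneg n f :
  (forall k, (k < n)%nat -> 0 <= f k) -> 0 <= sum_upto n f.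
Proof.
  intros H. rewrite <- (Rmult_0_r (INR n)), <- sum_upto_const.
  apply sum_upto_le; auto.
Qed.

Lemma sum_upto_abs n f : Rabs (sum_upto n f) <= sum_upto n (fun k => Rabs (f k)).
Proof.
  induction n; simpl; [rewrite Rabs_R0; lra|].
  eapply Rle_trans; [apply Rabs_triang|]. lra.
Qed.

Definition sum_except (n i : nat) (f : nat -> R) : R :=
  sum_upto n (fun k => if Nat.eqb k i then 0 else f k).

Lemma sum_except_eq n i f : (i < n)%nat -> sum_except n i f = sum_upto n f - f i.
Proof.
  unfold sum_except. induction n as [|n IH]; intros Hi; [lia|]. simpl.
  destruct (Nat.eqb_spec n i) as [->|Hni].
  - rewrite (sum_upto_ext i _ f); [ring|].
    intros k Hk. destruct (Nat.eqb_spec k i); [lia|auto].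
  - rewrite IH by lia. ring.
Qed.

Lemma sum_except_const n i c : (i < n)%nat -> sum_except n i (fun _ => c) = (INR n - 1) * c.
Proof. intros Hi. rewrite sum_except_eq, sum_upto_const by auto. ring. Qed.

Lemma sum_except_le n i f g :
  (forall k, (k < n)%nat -> k <> i -> f k <= g k) -> sum_except n i f <= sum_except n i g.
Proof.
  intros H. apply sum_upto_le. intros k Hk.
  destruct (Nat.eqb_spec k i); [lra|auto].
Qed.

Lemma sum_except_nonneg n i f :
  (forall k, (k < n)%nat -> 0 <= f k) -> 0 <= sum_except n i f.
Proof.
  intros H. apply sum_upto_nonneg. intros k Hk.
  destruct (Nat.eqb k i); [lra|auto].
Qed.

Lemma sum_except_le_sum n i f :
  (forall k, (k < n)%nat -> 0 <= f k) -> sum_except n i f <= sum_upto n f.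
Proof. intros H. apply sum_upto_le. intros k Hk. destruct (Nat.eqb k i); auto. lra. Qed.

Lemma sum_upto_term_le n f i :
  (i < n)%nat -> (forall k, (k < n)%nat -> 0 <= f k) -> f i <= sum_upto n f.
Proof.
  intros Hi H. pose proof (sum_except_eq n i f Hi).
  pose proof (sum_except_nonneg n i f H). lra.
Qed.

Lemma prod_upto_ext n f g :
  (forall k, (k < n)%nat -> f k = g k) -> prod_upto n f = prod_upto n g.
Proof.
  induction n as [|n IH]; intros H; simpl; auto.
  rewrite IH by (intros; apply H; lia). rewrite H by lia. auto.
Qed.

Lemma prod_upto_extract n m f : (m < n)%nat ->
  prod_upto n f = f m * prod_upto n (fun k => if Nat.eqb k m then 1 else f k).
Proof.
  induction n as [|n IH]; intros Hm; [lia|]. simpl.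
  destruct (Nat.eqb_spec n m) as [->|Hnm].
  - rewrite (prod_upto_ext m (fun k => if Nat.eqb k m then 1 else f k) f); [ring|].
    intros k Hk. destruct (Nat.eqb_spec k m); [lia|auto].
  - rewrite IH by lia. ring.
Qed.

Lemma prod_upto_pos n f : (forall k, (k < n)%nat -> 0 < f k) -> 0 < prod_upto n f.
Proof.
  induction n; intros H; simpl; [lra|].
  apply Rmult_lt_0_compat; [apply IHn; intros|]; apply H; lia.
Qed.

Lemma Rmult_le_1 a b : 0 <= a <= 1 -> 0 <= b <= 1 -> 0 <= a * b <= 1.
Proof. intros. split; [apply Rmult_le_pos|]; nra. Qed.

Lemma prod_upto_unit n f :
  (forall k, (k < n)%nat -> 0 <= f k <= 1) -> 0 <= prod_upto n f <= 1.
Proof.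
  induction n; intros H; simpl; [lra|].
  apply Rmult_le_1; [apply IHn; intros|]; apply H; lia.
Qed.

Lemma Rmult_unit_lipschitz a a' b b' :
  0 <= a' <= 1 -> 0 <= b <= 1 ->
  Rabs (a * b - a' * b') <= Rabs (a - a') + Rabs (b - b').
Proof.
  intros Ha' Hb.
  replace (a * b - a' * b') with ((a - a') * b + a' * (b - b')) by ring.
  eapply Rle_trans; [apply Rabs_triang|]. rewrite !Rabs_mult.
  rewrite (Rabs_right b), (Rabs_right a') by lra.
  pose proof (Rabs_pos (a - a')). pose proof (Rabs_pos (b - b')). nra.
Qed.

Lemma prod_upto_lipschitz n f g :
  (forall k, (k < n)%nat -> 0 <= f k <= 1) -> (forall k, (k < n)%nat -> 0 <= g k <= 1) ->
  Rabs (prod_upto n f - prod_upto n g) <= sum_upto n (fun k => Rabs (f k - g k)).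
Proof.
  induction n as [|n IH]; intros Hf Hg; simpl; [rewrite Rminus_diag, Rabs_R0; lra|].
  eapply Rle_trans; [apply Rmult_unit_lipschitz|].
  - apply prod_upto_unit. intros; apply Hg; lia.
  - apply Hf; lia.
  - apply Rplus_le_compat_r, IH; intros; [apply Hf|apply Hg]; lia.
Qed.

(** * The best-response derivative *)

Lemma upd_eq q i x : upd q i x i = x.
Proof. unfold upd. rewrite Nat.eqb_refl. auto. Qed.

Lemma upd_neq q i x k : k <> i -> upd q i x k = q k.
Proof. intros H. unfold upd. destruct (Nat.eqb_spec k i); [lia|auto]. Qed.

Lemma upd_same q i : upd q i (q i) = q.
Proof.
  apply functional_extensionality. intros k. unfold upd.
  destruct (Nat.eqb_spec k i) as [->|]; auto.
Qed.

Lemma alpha_upd N q i x : alpha N (upd q i x) i = alpha N q i.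
Proof.
  apply prod_upto_ext. intros k _.
  destruct (Nat.eqb_spec k i); [auto|]. rewrite upd_neq; auto.
Qed.

Definition gamma_excl (N : nat) (q : nat -> R) (i j : nat) : R :=
  prod_upto N (fun k => if Nat.eqb k i then 1 else if Nat.eqb k j then q k else 1 - q k).

Lemma gamma_upd N q i j x : (i < N)%nat -> (j < N)%nat -> j <> i ->
  gamma N (upd q i x) j = (1 - x) * gamma_excl N q i j.
Proof.
  intros Hi Hj Hij. unfold gamma, alpha, gamma_excl. rewrite upd_neq by auto.
  set (rest := fun k => if Nat.eqb k i then 1 else if Nat.eqb k j then 1 else 1 - q k).
  assert (Hother : prod_upto N (fun k => if Nat.eqb k j then 1 else 1 - upd q i x k)
                   = (1 - x) * prod_upto N rest).
  { rewrite (prod_upto_extract N i) by auto.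
    destruct (Nat.eqb_spec i j); [lia|]. rewrite upd_eq. f_equal.
    apply prod_upto_ext. intros k _. unfold rest.
    destruct (Nat.eqb_spec k i), (Nat.eqb_spec k j); auto. rewrite upd_neq; auto. }
  assert (Hexcl : prod_upto N (fun k => if Nat.eqb k i then 1 else if Nat.eqb k j then q k else 1 - q k)
                  = q j * prod_upto N rest).
  { rewrite (prod_upto_extract N j) by auto.
    destruct (Nat.eqb_spec j i); [lia|]. rewrite Nat.eqb_refl. f_equal.
    apply prod_upto_ext. intros k _. unfold rest.
    destruct (Nat.eqb_spec k i), (Nat.eqb_spec k j); auto. }
  rewrite Hother, Hexcl. ring.
Qed.

(* Up to the factor -A/(N-1), the derivative in q_i of A alpha_i gammabar_{-i}. *)
Definition cross_term (N : nat) (q : nat -> R) (i : nat) : R :=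
  sum_except N i (fun j => alpha N q i * gamma_excl N q i j).

Definition field_explicit (N : nat) (C A M : R) (q : nat -> R) (i : nat) : R :=
  C / q i - M - A / (INR N - 1) * cross_term N q i.

Lemma V_upd N C A M q i x : (i < N)%nat ->
  V N C A M (upd q i x) i =
  C * ln (x * alpha N q i)
  + A / (INR N - 1) * (1 - x) * cross_term N q i - M * x.
Proof.
  intros Hi. unfold V, gammabar, gamma at 1, cross_term, sum_except.
  rewrite upd_eq, alpha_upd.
  rewrite (sum_upto_ext N _ (fun j => (1 - x) * (if Nat.eqb j i then 0 else gamma_excl N q i j))).
  2: { intros j Hj. destruct (Nat.eqb_spec j i); [ring|]. apply gamma_upd; auto. }
  rewrite (sum_upto_ext N (fun j => if Nat.eqb j i then 0 else _)
             (fun j => alpha N q i * (if Nat.eqb j i then 0 else gamma_excl N q i j))).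
  2: { intros j _. destruct (Nat.eqb j i); ring. }
  rewrite !sum_upto_scal_l. unfold Rdiv. ring.
Qed.

Lemma is_derive_interior_max (f : R -> R) a b c l :
  a < c < b -> (forall x, a < x < b -> f x <= f c) -> is_derive f c l -> l = 0.
Proof.
  intros Hc Hmax Hd. apply is_derive_Reals in Hd.
  apply (deriv_maximum f a b c (exist _ l Hd)); try lra.
  intros x Hax Hxb. apply Hmax. lra.
Qed.

Lemma alpha_pos N q i : in_box N q -> 0 < alpha N q i.
Proof.
  intros Hq. apply prod_upto_pos. intros k Hk.
  destruct (Nat.eqb k i); [lra|]. destruct (Hq k Hk); lra.
Qed.

Lemma is_derive_V_upd N C A M q i x : (i < N)%nat -> in_box N q -> 0 < x ->
  is_derive (fun y => V N C A M (upd q i y) i) x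
    (C / x - M - A / (INR N - 1) * cross_term N q i).
Proof.
  intros Hi Hq Hx. pose proof (alpha_pos N q i Hq) as Ha.
  apply (is_derive_ext (fun y => C * ln (y * alpha N q i)
          + A / (INR N - 1) * (1 - y) * cross_term N q i - M * y)).
  { intros y. symmetry. apply V_upd; auto. }
  set (K := A / (INR N - 1)). auto_derive.
  - apply Rmult_lt_0_compat; auto.
  - field. lra.
Qed.

Lemma field_eq N C A M q i : in_box N q -> (i < N)%nat ->
  field N C A M q i = field_explicit N C A M q i.
Proof.
  intros Hq Hi. apply is_derive_unique, is_derive_V_upd; auto. apply Hq; auto.
Qed.

Lemma Nash_field_zero N C A M qs i : (i < N)%nat ->
  is_Nash N C A M (sym_profile qs) -> field_explicit N C A M (sym_profile qs) i = 0.
Proof.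
  intros Hi [Hbox Hbest]. pose proof (Hbox i Hi) as Hq.
  apply (is_derive_interior_max (fun x => V N C A M (upd (sym_profile qs) i x) i) 0 1 qs).
  - exact Hq.
  - intros x Hx. rewrite (upd_same (sym_profile qs) i : upd _ i qs = _). apply Hbest; auto.
  - apply is_derive_V_upd; auto. apply Hq.
Qed.

(** * Lipschitz and dissipation estimates *)

Definition in_cube (N : nat) (p : nat -> R) : Prop :=
  forall k, (k < N)%nat -> 0 <= p k <= 1.

Definition l1_except (N : nat) (p p' : nat -> R) (i : nat) : R :=
  sum_except N i (fun k => Rabs (p k - p' k)).

Lemma in_box_cube N p : in_box N p -> in_cube N p.
Proof. intros H k Hk. destruct (H k Hk). lra. Qed.

Lemma alpha_unit N p i : in_cube N p -> 0 <= alpha N p i <= 1.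
Proof.
  intros H. apply prod_upto_unit. intros k Hk.
  destruct (Nat.eqb k i); [lra|]. destruct (H k Hk); lra.
Qed.

Lemma gamma_excl_unit N p i j : in_cube N p -> 0 <= gamma_excl N p i j <= 1.
Proof.
  intros H. apply prod_upto_unit. intros k Hk.
  destruct (Nat.eqb k i); [lra|]. destruct (Nat.eqb k j); destruct (H k Hk); lra.
Qed.

Lemma alpha_lipschitz N p p' i : in_cube N p -> in_cube N p' ->
  Rabs (alpha N p i - alpha N p' i) <= l1_except N p p' i.
Proof.
  intros H H'. eapply Rle_trans; [apply prod_upto_lipschitz|].
  1,2: intros k Hk; destruct (Nat.eqb k i); [lra|]; destruct (H k Hk), (H' k Hk); lra.
  apply sum_upto_le. intros k _. destruct (Nat.eqb k i).
  - rewrite Rminus_diag, Rabs_R0. lra.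
  - rewrite <- Rabs_Ropp. apply Req_le. f_equal. ring.
Qed.

Lemma gamma_excl_lipschitz N p p' i j : in_cube N p -> in_cube N p' ->
  Rabs (gamma_excl N p i j - gamma_excl N p' i j) <= l1_except N p p' i.
Proof.
  intros H H'. eapply Rle_trans; [apply prod_upto_lipschitz|].
  1,2: intros k Hk; destruct (Nat.eqb k i); [lra|];
       destruct (Nat.eqb k j); destruct (H k Hk), (H' k Hk); lra.
  apply sum_upto_le. intros k _. destruct (Nat.eqb k i).
  - rewrite Rminus_diag, Rabs_R0. lra.
  - destruct (Nat.eqb k j); [lra|]. rewrite <- Rabs_Ropp. apply Req_le. f_equal. ring.
Qed.

Lemma cross_term_lipschitz N p p' i : (i < N)%nat -> in_cube N p -> in_cube N p' ->
  Rabs (cross_term N p i - cross_term N p' i) <= 2 * (INR N - 1) * l1_except N p p' i.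
Proof.
  intros Hi H H'. unfold cross_term, sum_except.
  rewrite <- sum_upto_minus. eapply Rle_trans; [apply sum_upto_abs|].
  replace (2 * (INR N - 1) * l1_except N p p' i)
    with (sum_except N i (fun _ => 2 * l1_except N p p' i))
    by (rewrite sum_except_const by auto; ring).
  apply sum_upto_le. intros k Hk. destruct (Nat.eqb k i).
  - rewrite Rminus_diag, Rabs_R0. lra.
  - eapply Rle_trans; [apply Rmult_unit_lipschitz; [apply alpha_unit|apply gamma_excl_unit]; auto|].
    pose proof (alpha_lipschitz N p p' i H H').
    pose proof (gamma_excl_lipschitz N p p' i k H H'). lra.
Qed.

Lemma cross_term_range N p i : (i < N)%nat -> in_cube N p ->
  0 <= cross_term N p i <= INR N - 1.
Proof.
  intros Hi H. split.
  - apply sum_except_nonneg. intros k _.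
    apply Rmult_le_pos; [apply alpha_unit|apply gamma_excl_unit]; auto.
  - rewrite <- (Rmult_1_r (INR N - 1)), <- (sum_except_const N i) by auto.
    apply sum_except_le. intros k _ _.
    apply Rmult_le_1; [apply alpha_unit|apply gamma_excl_unit]; auto.
Qed.

Lemma sum_abs_cross_le N (e : nat -> R) :
  sum_upto N (fun i => Rabs (e i) * sum_except N i (fun k => Rabs (e k)))
  <= (INR N - 1) * sum_upto N (fun i => e i ^ 2).
Proof.
  set (E := sum_upto N (fun i => e i ^ 2)).
  apply Rle_trans with
    (sum_upto N (fun i => sum_except N i (fun k => / 2 * e i ^ 2 + / 2 * e k ^ 2))).
  - apply sum_upto_le. intros i Hi. unfold sum_except.
    rewrite <- sum_upto_scal_l. apply sum_upto_le. intros k _.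
    destruct (Nat.eqb k i); [lra|].
    rewrite <- (pow2_abs (e i)), <- (pow2_abs (e k)).
    pose proof (pow2_ge_0 (Rabs (e i) - Rabs (e k))). nra.
  - apply Req_le.
    rewrite (sum_upto_ext N _ (fun i => (INR N - 1) / 2 * e i ^ 2 + / 2 * (E - e i ^ 2))).
    + rewrite sum_upto_plus, !sum_upto_scal_l, sum_upto_minus, sum_upto_const.
      fold E. field.
    + intros i Hi. unfold sum_except.
      rewrite (sum_upto_ext N _ (fun k => (if Nat.eqb k i then 0 else / 2 * e i ^ 2)
                                      + / 2 * (if Nat.eqb k i then 0 else e k ^ 2))).
      * rewrite sum_upto_plus, sum_upto_scal_l.
        fold (sum_except N i (fun _ => / 2 * e i ^ 2)) (sum_except N i (fun k => e k ^ 2)).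
        rewrite sum_except_const, sum_except_eq by auto. fold E. field.
      * intros k _. destruct (Nat.eqb k i); ring.
Qed.

Definition decay_rate (N : nat) (C A qs : R) : R := C / qs - 2 * A * (INR N - 1).

Lemma decay_rate_pos N C A qs : 0 < C -> 0 < qs < 1 -> C > 2 * (INR N - 1) * A ->
  0 < decay_rate N C A qs.
Proof.
  intros HC Hq H. unfold decay_rate.
  assert (C <= C / qs).
  { unfold Rdiv. rewrite <- (Rmult_1_r C) at 1. apply Rmult_le_compat_l; [lra|].
    rewrite <- Rinv_1. apply Rinv_le_contravar; lra. }
  lra.
Qed.


(** * Squared distance along trajectories *)

Definition sq_dist (N : nat) (qs : R) (q : nat -> R) : R :=
  sum_upto N (fun i => (q i - qs) ^ 2).

Lemma sq_dist_nonneg N qs q : 0 <= sq_dist N qs q.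
Proof. apply sum_upto_nonneg. intros. apply pow2_ge_0. Qed.

Lemma sq_dist_coord N qs q m i : 0 < m -> (i < N)%nat ->
  sq_dist N qs q < m ^ 2 -> Rabs (q i - qs) < m.
Proof.
  intros Hm Hi H.
  pose proof (sum_upto_term_le N (fun k => (q k - qs) ^ 2) i Hi (fun k _ => pow2_ge_0 _)).
  unfold sq_dist in H. cbv beta in *. rewrite <- (pow2_abs (q i - qs)) in *.
  pose proof (Rabs_pos (q i - qs)). nra.
Qed.

Lemma sq_dist_le N qs q d : near_lt N q (sym_profile qs) d ->
  sq_dist N qs q <= INR N * d ^ 2.
Proof.
  intros H. unfold sq_dist. rewrite <- sum_upto_const. apply sum_upto_le.
  intros k Hk. specialize (H k Hk). unfold sym_profile in H.
  rewrite <- (pow2_abs (q k - qs)). pose proof (Rabs_pos (q k - qs)). nra.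
Qed.

Lemma is_derive_sq_dist N qs (x : R -> nat -> R) (d : nat -> R) t :
  (forall i, (i < N)%nat -> is_derive (fun s => x s i) t (d i)) ->
  is_derive (fun s => sq_dist N qs (x s)) t (2 * sum_upto N (fun i => (x t i - qs) * d i)).
Proof.
  unfold sq_dist. induction N as [|N IH]; intros Hd; simpl.
  - apply (is_derive_ext (fun _ => 0)); [auto|].
    replace (2 * 0) with 0 by ring. apply (@is_derive_const R_AbsRing).
  - replace (2 * (sum_upto N (fun i => (x t i - qs) * d i) + (x t N - qs) * d N))
      with (2 * sum_upto N (fun i => (x t i - qs) * d i)
            + INR 2 * d N * (x t N - qs) ^ Nat.pred 2) by (simpl; ring).
    apply (is_derive_plus (fun s => sum_upto N (fun i => (x s i - qs) ^ 2))).
    + apply IH. intros; apply Hd; lia.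
    + apply (is_derive_pow (fun s => x s N - qs)).
      replace (d N) with (d N - 0) by ring.
      apply (is_derive_minus (fun s => x s N) (fun _ => qs)).
      * apply Hd; lia.
      * apply (@is_derive_const R_AbsRing).
Qed.

Lemma filterlim_sum_upto N (f : nat -> R -> R) (l : nat -> R) F {FF : Filter F} :
  (forall i, (i < N)%nat -> filterlim (f i) F (locally (l i))) ->
  filterlim (fun t => sum_upto N (fun i => f i t)) F (locally (sum_upto N l)).
Proof.
  induction N as [|N IH]; intros H; simpl; [apply filterlim_const|].
  apply (filterlim_comp_2 (F := F) (G := locally (sum_upto N l)) (H := locally (l N)) _ _ Rplus).
  - apply IH. intros; apply H; lia.
  - apply H; lia.
  - apply (@filterlim_plus R_AbsRing R_NormedModule).
Qed.

Lemma filterlim_sq_dist N qs (x : R -> nat -> R) F {FF : Filter F} (q : nat -> R) :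
  (forall i, (i < N)%nat -> filterlim (fun s => x s i) F (locally (q i))) ->
  filterlim (fun s => sq_dist N qs (x s)) F (locally (sq_dist N qs q)).
Proof.
  intros H.
  refine (filterlim_sum_upto N (fun i s => (x s i - qs) ^ 2) (fun i => (q i - qs) ^ 2) F _).
  intros i Hi.
  apply (filterlim_comp _ _ _ (fun s => x s i) (fun y => (y - qs) ^ 2) F (locally (q i))).
  - apply H; auto.
  - apply (@ex_derive_continuous R_AbsRing R_NormedModule). auto_derive. auto.
Qed.

Lemma continuous_at_right (f : R -> R) t :
  continuous f t -> filterlim f (at_right t) (locally (f t)).
Proof.
  intros Hc P HP. unfold filtermap, at_right, within.
  apply (filter_imp (fun x => P (f x))); [auto|apply Hc, HP].
Qed.

(* Mean value theorem on [e, t], then e -> 0 by right-continuity. *)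
Lemma nonincreasing_from_right (g dg : R -> R) (T : Rbar) :
  filterlim g (at_right 0) (locally (g 0)) ->
  (forall t, 0 < t -> Rbar_lt t T -> is_derive g t (dg t)) ->
  (forall t, 0 < t -> Rbar_lt t T -> dg t <= 0) ->
  forall t, 0 <= t -> Rbar_lt t T -> g t <= g 0.
Proof.
  intros Hc Hd Hn t Ht HT.
  assert (HlT : forall s, s <= t -> Rbar_lt s T).
  { intros s Hs. destruct T; simpl in *; auto; lra. }
  destruct (Req_dec t 0) as [->|Ht0]; [lra|].
  assert (Hle : forall e, 0 < e < t -> g t <= g e).
  { intros e He. destruct (MVT_gen g e t dg) as [c [Hc1 Hc2]].
    - intros s Hs. rewrite Rmin_left, Rmax_right in Hs by lra. apply Hd; [lra|]. apply HlT; lra.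
    - intros s Hs. rewrite Rmin_left, Rmax_right in Hs by lra.
      apply continuity_pt_filterlim, (@ex_derive_continuous R_AbsRing R_NormedModule).
      exists (dg s). apply Hd; [lra|]. apply HlT; lra.
    - rewrite Rmin_left, Rmax_right in Hc1 by lra.
      assert (dg c <= 0) by (apply Hn; [lra|apply HlT; lra]). nra. }
  destruct (Rle_dec (g t) (g 0)) as [|Hgt]; auto. exfalso.
  assert (Heta : 0 < g t - g 0) by lra.
  destruct (Hc (ball (g 0) (mkposreal _ Heta)) (locally_ball _ _)) as [d Hball].
  pose proof (cond_pos d).
  set (e := Rmin (d / 2) (t / 2)).
  assert (He : 0 < e) by (apply Rmin_glb_lt; lra).
  assert (e <= t / 2) by apply Rmin_r. assert (e <= d / 2) by apply Rmin_l.
  assert (Hge : ball (g 0) (mkposreal _ Heta) (g e)).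
  { apply Hball; auto. change (Rabs (e - 0) < d). rewrite Rminus_0_r, Rabs_right; lra. }
  change (Rabs (g e - g 0) < g t - g 0) in Hge. apply Rabs_lt_between' in Hge.
  assert (g t <= g e) by (apply Hle; lra). lra.
Qed.

(* (W e^(2 kappa t))' = e^(2 kappa t) (W' + 2 kappa W) <= 0. *)
Lemma sq_dist_exp_decay N qs (x d : R -> nat -> R) (T : Rbar) kappa :
  (forall i, (i < N)%nat -> filterlim (fun s => x s i) (at_right 0) (locally (x 0 i))) ->
  (forall t, 0 < t -> Rbar_lt t T -> forall i, (i < N)%nat ->
     is_derive (fun s => x s i) t (d t i)) ->
  (forall t, 0 < t -> Rbar_lt t T ->
     sum_upto N (fun i => (x t i - qs) * d t i) <= - kappa * sq_dist N qs (x t)) ->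
  forall t, 0 <= t -> Rbar_lt t T ->
  sq_dist N qs (x t) * exp (2 * kappa * t) <= sq_dist N qs (x 0).
Proof.
  intros Hcont Hder Hdiss.
  set (W := fun s => sq_dist N qs (x s)). set (e := fun s => exp (2 * kappa * s)).
  set (dW := fun s => 2 * sum_upto N (fun i => (x s i - qs) * d s i)).
  intros t Ht HT. change (W t * e t <= W 0).
  replace (W 0) with (W 0 * e 0) by (unfold e; rewrite Rmult_0_r, exp_0; ring).
  apply (nonincreasing_from_right (fun s => W s * e s)
           (fun s => dW s * e s + W s * (2 * kappa * e s)) T); auto.
  - refine (filterlim_comp_2 (F := at_right 0) W e Rmult _ _ _).
    + apply filterlim_sq_dist; [exact _|auto].
    + apply continuous_at_right, (@ex_derive_continuous R_AbsRing R_NormedModule).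
      unfold e. auto_derive. auto.
    + apply (@filterlim_mult R_AbsRing).
  - intros s Hs HsT. apply (is_derive_mult W e); [| |intros; apply Rmult_comm].
    + apply is_derive_sq_dist. intros i Hi. apply Hder; auto.
    + unfold e. auto_derive; auto. ring.
  - intros s Hs HsT. pose proof (Hdiss s Hs HsT). assert (0 < e s) by apply exp_pos.
    unfold dW, W, e in *. nra.
Qed.

(** * Global solutions by Picard iteration *)

Lemma lipschitz_continuous (f : R -> R) K t :
  0 <= K -> (forall a b, Rabs (f a - f b) <= K * Rabs (a - b)) -> continuous f t.
Proof.
  intros HK H. apply filterlim_locally. intros eps.
  assert (Hd : 0 < eps / (K + 1)) by (apply Rdiv_lt_0_compat; [apply cond_pos|lra]).
  exists (mkposreal _ Hd). intros y Hy. change (Rabs (y - t) < eps / (K + 1)) in Hy.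
  change (Rabs (f y - f t) < eps). eapply Rle_lt_trans; [apply H|].
  assert (K * (eps / (K + 1)) < eps).
  { replace (K * (eps / (K + 1))) with (eps - eps / (K + 1)) by (field; lra). lra. }
  pose proof (Rabs_pos (y - t)). nra.
Qed.

Section IntegralsOfContinuous.

Variable g : R -> R.
Hypothesis Hg : forall s, continuous g s.

Lemma ex_RInt_cont a b : ex_RInt g a b.
Proof. apply (@ex_RInt_continuous R_CompleteNormedModule). intros; apply Hg. Qed.

Lemma abs_RInt_le_const_dist Bd a b :
  (forall s, Rabs (g s) <= Bd) -> Rabs (RInt g a b) <= Bd * Rabs (b - a).
Proof.
  intros Hb. destruct (Rle_dec a b).
  - rewrite (Rabs_right (b - a)), Rmult_comm by lra.
    apply abs_RInt_le_const; auto. apply ex_RInt_cont.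
  - rewrite <- (opp_RInt_swap g) by apply ex_RInt_cont.
    change (Rabs (- RInt g b a) <= Bd * Rabs (b - a)).
    rewrite Rabs_Ropp, (Rabs_left (b - a)), Rmult_comm by lra.
    replace (- (b - a)) with (a - b) by ring.
    apply abs_RInt_le_const; [lra|apply ex_RInt_cont|auto].
Qed.

Lemma abs_RInt_le_antiderivative (P p : R -> R) t : 0 <= t ->
  (forall s, continuous p s) -> (forall s, is_derive P s (p s)) ->
  (forall s, 0 <= s <= t -> Rabs (g s) <= p s) ->
  Rabs (RInt g 0 t) <= P t - P 0.
Proof.
  intros Ht Hp HP Hb.
  eapply Rle_trans; [apply abs_RInt_le; [auto|apply ex_RInt_cont]|].
  eapply Rle_trans; [apply (RInt_le (fun s => Rabs (g s)) p)|]; auto.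
  - apply (@ex_RInt_continuous R_CompleteNormedModule). intros.
    apply continuous_Rabs_comp, Hg.
  - apply (@ex_RInt_continuous R_CompleteNormedModule). auto.
  - intros x Hx. apply Hb. lra.
  - apply Req_le, is_RInt_unique, (is_RInt_derive P p); auto.
Qed.

End IntegralsOfContinuous.

Lemma RInt_minus_cont (f g : R -> R) a b :
  (forall s, continuous f s) -> (forall s, continuous g s) ->
  RInt (fun s => f s - g s) a b = RInt f a b - RInt g a b.
Proof. intros Hf Hg. apply (RInt_minus f g); apply ex_RInt_cont; auto. Qed.

Section Picard.

Variables (N : nat) (G : (nat -> R) -> nat -> R) (B L : R) (x0 : nat -> R).
Hypotheses (HB : 0 <= B) (HL : 0 <= L).
Hypothesis G_bounded : forall q i, (i < N)%nat -> Rabs (G q i) <= B.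
Hypothesis G_lipschitz : forall q p i, (i < N)%nat ->
  Rabs (G q i - G p i) <= L * sum_upto N (fun k => Rabs (q k - p k)).

Lemma G_comp_continuous (y : R -> nat -> R) K i : 0 <= K -> (i < N)%nat ->
  (forall j, (j < N)%nat -> forall a b, Rabs (y a j - y b j) <= K * Rabs (a - b)) ->
  forall s, continuous (fun s => G (y s) i) s.
Proof.
  intros HK Hi Hy s. apply (lipschitz_continuous _ (L * (INR N * K))).
  { pose proof (pos_INR N). apply Rmult_le_pos; [|apply Rmult_le_pos]; auto. }
  intros a b. eapply Rle_trans; [apply G_lipschitz; auto|].
  rewrite Rmult_assoc, Rmult_assoc. apply Rmult_le_compat_l; auto.
  rewrite <- sum_upto_const. apply sum_upto_le. intros; apply Hy; auto.
Qed.

Fixpoint picard (k : nat) (t : R) (i : nat) : R :=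
  match k with
  | O => x0 i
  | S k' => x0 i + RInt (fun s => G (picard k' s) i) 0 t
  end.

Lemma picard_lipschitz k i : (i < N)%nat ->
  forall a b, Rabs (picard k a i - picard k b i) <= B * Rabs (a - b).
Proof.
  revert i. induction k as [|k IH]; intros i Hi a b; simpl.
  - rewrite Rminus_diag, Rabs_R0. apply Rmult_le_pos; [auto|apply Rabs_pos].
  - set (g := fun s => G (picard k s) i).
    assert (Hc : forall s, continuous g s) by (apply (G_comp_continuous _ B); auto).
    pose proof (RInt_Chasles g 0 b a (ex_RInt_cont g Hc 0 b) (ex_RInt_cont g Hc b a)) as Hsplit.
    change (RInt g 0 b + RInt g b a = RInt g 0 a) in Hsplit.
    replace (x0 i + RInt g 0 a - (x0 i + RInt g 0 b)) with (RInt g b a) by lra.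
    apply abs_RInt_le_const_dist; auto. intros; apply G_bounded; auto.
Qed.

Lemma picard_G_continuous k i : (i < N)%nat -> forall s, continuous (fun s => G (picard k s) i) s.
Proof. intros Hi. apply (G_comp_continuous _ B); auto. intros; apply picard_lipschitz; auto. Qed.

Definition picard_bound (k : nat) (t : R) : R :=
  B * (INR N * L) ^ k / INR (Factorial.fact (S k)) * t ^ S k.

Lemma picard_bound_0 k : picard_bound k 0 = 0.
Proof. unfold picard_bound. simpl. unfold Rdiv. ring. Qed.

Lemma is_derive_picard_bound k s :
  is_derive (picard_bound (S k)) s (INR N * L * picard_bound k s).
Proof.
  unfold picard_bound.
  replace (INR N * L * (B * (INR N * L) ^ k / INR (Factorial.fact (S k)) * s ^ S k))
    with (B * (INR N * L) ^ S k / INR (Factorial.fact (S (S k)))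
          * (INR (S (S k)) * s ^ Nat.pred (S (S k)))).
  - apply is_derive_scal, is_derive_Reals, derivable_pt_lim_pow.
  - rewrite (fact_simpl (S k)), mult_INR.
    pose proof (INR_fact_neq_0 (S k)).
    assert (INR (S (S k)) <> 0) by (apply not_0_INR; lia).
    simpl pow. simpl Nat.pred. field. auto.
Qed.

Lemma picard_bound_continuous k s : continuous (picard_bound k) s.
Proof.
  apply (@ex_derive_continuous R_AbsRing R_NormedModule).
  unfold picard_bound. auto_derive. auto.
Qed.

Lemma picard_bound_coef_nonneg k : 0 <= B * (INR N * L) ^ k / INR (Factorial.fact (S k)).
Proof.
  pose proof (pos_INR N). pose proof (lt_0_INR _ (Factorial.lt_O_fact (S k))).
  apply Rdiv_le_0_compat; [apply Rmult_le_pos|]; auto.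
  apply pow_le, Rmult_le_pos; auto.
Qed.

Lemma picard_bound_mono k s t : 0 <= s <= t -> picard_bound k s <= picard_bound k t.
Proof.
  intros Hst. pose proof (picard_bound_coef_nonneg k).
  apply Rmult_le_compat_l; auto. apply pow_incr. lra.
Qed.

Lemma picard_bound_nonneg k t : 0 <= t -> 0 <= picard_bound k t.
Proof.
  intros Ht. rewrite <- (picard_bound_0 k). apply picard_bound_mono. lra.
Qed.

(* Dominated by B t (N L t)^k / k!, a multiple of the exponential series. *)
Lemma ex_series_picard_bound t : 0 <= t -> ex_series (fun k => picard_bound k t).
Proof.
  intros Ht. set (z := INR N * L * t).
  assert (Hexp : ex_series (fun k => scal (pow_n z k) (/ INR (Factorial.fact k))))
    by (eexists; apply is_exp_Reals).
  apply (ex_series_scal_l (B * t)) in Hexp.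
  refine (@ex_series_le R_AbsRing R_CompleteNormedModule _ _ _ Hexp). intros k.
  change (Rabs (picard_bound k t) <= B * t * (pow_n z k * / INR (Factorial.fact k))).
  rewrite Rabs_right by (apply Rle_ge, picard_bound_nonneg; auto).
  rewrite pow_n_pow. unfold picard_bound, z.
  assert (Hfact : / INR (Factorial.fact (S k)) <= / INR (Factorial.fact k)).
  { apply Rinv_le_contravar; [apply lt_0_INR, Factorial.lt_O_fact|].
    apply le_INR, Factorial.fact_le. lia. }
  assert (0 <= B * (INR N * L * t) ^ k * t).
  { pose proof (pos_INR N). apply Rmult_le_pos; [apply Rmult_le_pos|]; auto.
    apply pow_le. apply Rmult_le_pos; [apply Rmult_le_pos|]; auto. }
  replace (B * (INR N * L) ^ k / INR (Factorial.fact (S k)) * t ^ S k)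
    with (B * (INR N * L * t) ^ k * t * / INR (Factorial.fact (S k)))
    by (rewrite Rpow_mult_distr; simpl; unfold Rdiv; ring).
  replace (B * t * ((INR N * L * t) ^ k * / INR (Factorial.fact k)))
    with (B * (INR N * L * t) ^ k * t * / INR (Factorial.fact k)) by ring.
  apply Rmult_le_compat_l; auto.
Qed.

Lemma picard_step_le k t i : 0 <= t -> (i < N)%nat ->
  Rabs (picard (S k) t i - picard k t i) <= picard_bound k t.
Proof.
  revert t i. induction k as [|k IH]; intros t i Ht Hi.
  - simpl. rewrite Rplus_minus_l.
    eapply Rle_trans; [apply (abs_RInt_le_const_dist _ (continuous_const _) B)|].
    + intros; apply G_bounded; auto.
    + unfold picard_bound. simpl. rewrite Rminus_0_r, Rabs_right by lra. lra.
  - set (g1 := fun s => G (picard (S k) s) i). set (g0 := fun s => G (picard k s) i).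
    assert (C1 : forall s, continuous g1 s) by (apply picard_G_continuous; auto).
    assert (C0 : forall s, continuous g0 s) by (apply picard_G_continuous; auto).
    replace (picard (S (S k)) t i - picard (S k) t i) with (RInt (fun s => g1 s - g0 s) 0 t).
    2: { rewrite RInt_minus_cont by auto.
         change (RInt g1 0 t - RInt g0 0 t = x0 i + RInt g1 0 t - (x0 i + RInt g0 0 t)). ring. }
    replace (picard_bound (S k) t) with (picard_bound (S k) t - picard_bound (S k) 0)
      by (rewrite picard_bound_0; ring).
    apply (abs_RInt_le_antiderivative _
             (fun s => @continuous_minus _ R_AbsRing R_NormedModule g1 g0 s (C1 s) (C0 s))
             _ (fun s => INR N * L * picard_bound k s)); auto.
    + intros s. apply (@continuous_mult _ R_AbsRing (fun _ => INR N * L) (picard_bound k)).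
      * apply continuous_const.
      * apply picard_bound_continuous.
    + intros s. apply is_derive_picard_bound.
    + intros s Hs. unfold g1, g0. eapply Rle_trans; [apply G_lipschitz; auto|].
      rewrite (Rmult_comm (INR N)), Rmult_assoc, <- sum_upto_const.
      apply Rmult_le_compat_l; auto. apply sum_upto_le. intros j Hj. apply IH; auto. lra.
Qed.

Definition picard_incr (t : R) (i k : nat) : R := picard (S k) t i - picard k t i.

(* For t < 0 the limit is taken at time 0, so the limit is constant on (-oo, 0]. *)
Definition picard_limit (t : R) (i : nat) : R :=
  x0 i + Series (picard_incr (Rmax 0 t) i).

Lemma sum_n_picard_incr t i k : sum_n (picard_incr t i) k = picard (S k) t i - x0 i.
Proof.
  induction k as [|k IH].
  - rewrite sum_O. reflexivity.
  - rewrite sum_Sn. change (plus ?a ?b) with (a + b).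
    rewrite IH. unfold picard_incr. simpl. ring.
Qed.

Lemma ex_series_picard_incr t i : 0 <= t -> (i < N)%nat -> ex_series (picard_incr t i).
Proof.
  intros Ht Hi. apply (@ex_series_le R_AbsRing R_CompleteNormedModule _ (fun k => picard_bound k t)).
  - intros k. apply picard_step_le; auto.
  - apply ex_series_picard_bound; auto.
Qed.

Lemma picard_limit_nonneg_time t i : 0 <= t ->
  picard_limit t i = x0 i + Series (picard_incr t i).
Proof. intros Ht. unfold picard_limit. rewrite Rmax_right by auto. reflexivity. Qed.

Lemma picard_limit_Rmax t i : picard_limit t i = picard_limit (Rmax 0 t) i.
Proof. rewrite (picard_limit_nonneg_time (Rmax 0 t)) by apply Rmax_l. reflexivity. Qed.

Lemma is_lim_seq_picard t i : 0 <= t -> (i < N)%nat ->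
  is_lim_seq (fun k => picard (S k) t i) (picard_limit t i).
Proof.
  intros Ht Hi. rewrite picard_limit_nonneg_time by auto.
  pose proof (Series_correct _ (ex_series_picard_incr t i Ht Hi)) as Hs.
  apply (is_lim_seq_plus' (fun _ => x0 i) _ (x0 i)) in Hs; [|apply is_lim_seq_const].
  eapply is_lim_seq_ext; [|exact Hs]. intros k. cbv beta.
  rewrite sum_n_picard_incr. change (x0 i + (picard (S k) t i - x0 i) = picard (S k) t i). ring.
Qed.

Lemma picard_limit_0 i : picard_limit 0 i = x0 i.
Proof.
  rewrite picard_limit_nonneg_time by lra.
  rewrite (Series_ext _ (fun _ => 0 * 0)), Series_scal_l; [ring|].
  intros k. unfold picard_incr.
  assert (Hp : forall m, picard m 0 i = x0 i).
  { intros [|m]; simpl; [auto|]. rewrite RInt_point. apply Rplus_0_r. }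
  rewrite !Hp. ring.
Qed.

Definition picard_tail (t : R) (k : nat) : R :=
  Series (fun m => picard_bound m t) - sum_n (fun m => picard_bound m t) k.

Lemma picard_tail_lim t : 0 <= t -> is_lim_seq (picard_tail t) 0.
Proof.
  intros Ht. pose proof (Series_correct _ (ex_series_picard_bound t Ht)) as Hs.
  apply (is_lim_seq_minus' (fun _ => Series (fun m => picard_bound m t)) _ _ _
           (is_lim_seq_const _)) in Hs.
  rewrite Rminus_diag in Hs. exact Hs.
Qed.

Lemma picard_limit_close s t i k : 0 <= s <= t -> (i < N)%nat ->
  Rabs (picard_limit s i - picard (S k) s i) <= picard_tail t k.
Proof.
  intros Hst Hi. assert (Ht : 0 <= t) by lra.
  rewrite picard_limit_nonneg_time by lra.
  replace (picard (S k) s i) with (x0 i + sum_n (picard_incr s i) k)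
    by (rewrite sum_n_picard_incr; ring).
  unfold picard_tail.
  set (a := picard_incr s i). set (b := fun m => picard_bound m t).
  assert (Ha : ex_series a) by (apply ex_series_picard_incr; auto; lra).
  assert (Hb : ex_series b) by (apply ex_series_picard_bound; auto).
  assert (Hb' : ex_series (fun m => b (S k + m)%nat)) by (apply ex_series_incr_n, Hb).
  assert (Hab : forall m, Rabs (a (S k + m)%nat) <= b (S k + m)%nat).
  { intros m. unfold a, b. eapply Rle_trans; [apply picard_step_le; auto; lra|].
    apply picard_bound_mono; auto. }
  rewrite (Series_incr_n a (S k)), (Series_incr_n b (S k)), <- !sum_n_Reals; auto; try lia.
  simpl Nat.pred.
  set (ta := Series (fun m => a (S k + m)%nat)). set (tb := Series (fun m => b (S k + m)%nat)).
  set (sa := sum_n a k). set (sb := sum_n b k).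
  replace (x0 i + (sa + ta) - (x0 i + sa)) with ta by ring.
  replace (sb + tb - sb) with tb by ring.
  apply Rle_trans with (Series (fun m => Rabs (a (S k + m)%nat))).
  - apply Series_Rabs.
    refine (@ex_series_le R_AbsRing R_CompleteNormedModule _ _ _ Hb').
    intros m. change (Rabs (Rabs (a (S k + m)%nat)) <= b (S k + m)%nat).
    rewrite Rabs_Rabsolu. auto.
  - apply Series_le; auto. intros m. split; [apply Rabs_pos|auto].
Qed.
Lemma picard_limit_lipschitz i : (i < N)%nat ->
  forall a b, Rabs (picard_limit a i - picard_limit b i) <= B * Rabs (a - b).
Proof.
  intros Hi a b. rewrite (picard_limit_Rmax a), (picard_limit_Rmax b).
  pose proof (is_lim_seq_picard (Rmax 0 a) i (Rmax_l _ _) Hi) as La.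
  pose proof (is_lim_seq_picard (Rmax 0 b) i (Rmax_l _ _) Hi) as Lb.
  refine (is_lim_seq_le _ (fun _ => B * Rabs (a - b)) _ _ _
           (is_lim_seq_abs _ _ (is_lim_seq_minus' _ _ _ _ La Lb)) (is_lim_seq_const _)).
  intros k. cbv beta. eapply Rle_trans; [apply picard_lipschitz; auto|].
  apply Rmult_le_compat_l; auto.
  unfold Rmax. destruct (Rle_dec 0 a), (Rle_dec 0 b); unfold Rabs; repeat destruct Rcase_abs; lra.
Qed.

Lemma picard_limit_continuous i : (i < N)%nat ->
  forall s, continuous (fun t => picard_limit t i) s.
Proof. intros Hi s. apply (lipschitz_continuous _ B); auto. apply picard_limit_lipschitz; auto. Qed.

Lemma picard_limit_G_continuous i : (i < N)%nat ->
  forall s, continuous (fun s => G (picard_limit s) i) s.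
Proof. intros Hi. apply (G_comp_continuous _ B); auto. intros; apply picard_limit_lipschitz; auto. Qed.

(* Pass to the limit in picard (S (S k)) t = x0 + int_0^t G (picard (S k) s) ds,
   the integrands converging uniformly on [0, t] by [picard_limit_close]. *)
Lemma picard_limit_integral t i : 0 <= t -> (i < N)%nat ->
  picard_limit t i = x0 i + RInt (fun s => G (picard_limit s) i) 0 t.
Proof.
  intros Ht Hi.
  set (g := fun s => G (picard_limit s) i).
  set (err := fun k => t * (L * (INR N * picard_tail t k))).
  assert (Hclose : forall k, Rabs (RInt g 0 t - RInt (fun s => G (picard (S k) s) i) 0 t) <= err k).
  { intros k. rewrite <- RInt_minus_cont by (apply picard_limit_G_continuous || apply picard_G_continuous; auto).
    replace (err k) with ((t - 0) * (L * (INR N * picard_tail t k))) by (unfold err; ring).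
    apply abs_RInt_le_const; auto.
    - apply ex_RInt_cont. intros s.
      apply (@continuous_minus _ R_AbsRing R_NormedModule);
        [apply picard_limit_G_continuous|apply picard_G_continuous]; auto.
    - intros s Hs. eapply Rle_trans; [apply G_lipschitz; auto|].
      apply Rmult_le_compat_l; auto. rewrite <- sum_upto_const.
      apply sum_upto_le. intros j Hj. apply picard_limit_close; auto. }
  assert (Herr : is_lim_seq err 0).
  { unfold err. replace (Finite 0) with (Rbar_mult (t * (L * INR N)) 0) by (simpl; f_equal; ring).
    apply (is_lim_seq_ext (fun k => t * (L * INR N) * picard_tail t k)); [intros; ring|].
    apply is_lim_seq_scal_l, picard_tail_lim; auto. }
  assert (Hrhs : is_lim_seq (fun k => x0 i + RInt (fun s => G (picard (S k) s) i) 0 t) (x0 i + RInt g 0 t)).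
  { apply (is_lim_seq_plus' (fun _ => x0 i)); [apply is_lim_seq_const|].
    apply (is_lim_seq_le_le (fun k => RInt g 0 t - err k) _ (fun k => RInt g 0 t + err k)).
    - intros k. specialize (Hclose k). apply Rabs_le_between' in Hclose. lra.
    - rewrite <- (Rminus_0_r (RInt g 0 t)) at 1.
      apply (is_lim_seq_minus' (fun _ => RInt g 0 t)); auto. apply is_lim_seq_const.
    - rewrite <- (Rplus_0_r (RInt g 0 t)) at 1.
      apply (is_lim_seq_plus' (fun _ => RInt g 0 t)); auto. apply is_lim_seq_const. }
  pose proof (is_lim_seq_picard t i Ht Hi) as Hlhs. apply is_lim_seq_incr_1 in Hlhs.
  apply is_lim_seq_unique in Hlhs, Hrhs.
  change (Lim_seq (fun k => x0 i + RInt (fun s => G (picard (S k) s) i) 0 t)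
          = picard_limit t i) in Hlhs.
  rewrite Hrhs in Hlhs. injection Hlhs. auto.
Qed.

Lemma is_derive_picard_limit t i : 0 < t -> (i < N)%nat ->
  is_derive (fun s => picard_limit s i) t (G (picard_limit t) i).
Proof.
  intros Ht Hi. set (g := fun s => G (picard_limit s) i).
  assert (Hg : forall s, continuous g s) by (apply picard_limit_G_continuous; auto).
  apply (is_derive_ext_loc (fun s => x0 i + RInt g 0 s)).
  - exists (mkposreal t Ht). intros s Hs. change (Rabs (s - t) < t) in Hs.
    apply Rabs_lt_between' in Hs. symmetry. apply picard_limit_integral; auto. lra.
  - rewrite <- (Rplus_0_l (G (picard_limit t) i)).
    apply (is_derive_plus (fun _ => x0 i)); [apply (@is_derive_const R_AbsRing)|].
    apply (is_derive_RInt g _ 0 t); auto.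
    apply filter_forall. intros b. apply (@RInt_correct R_CompleteNormedModule), ex_RInt_cont; auto.
Qed.

End Picard.

(** * Stability of the symmetric equilibrium *)

Section SymmetricEquilibrium.

Variables (N : nat) (C A M qs : R).
Hypotheses (HN : (2 <= N)%nat) (HC : 0 < C) (HM : 0 < M) (HA : 0 <= A) (Hq : 0 < qs < 1).
Hypothesis Hnash : is_Nash N C A M (sym_profile qs).
Hypothesis Hgt : C > 2 * (INR N - 1) * A.

Let HN1 : 1 <= INR N - 1.
Proof. apply le_INR in HN. simpl in HN. lra. Qed.

(* Subtracting the vanishing field at the equilibrium, the private term C / q_i
   contributes -C / (p_i qs) <= -C / qs and the cross term at most its Lipschitz bound. *)
Lemma field_coord_dissipative p i : (i < N)%nat -> in_box N p ->
  (p i - qs) * field_explicit N C A M p i <=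
  - (C / qs) * (p i - qs) ^ 2
  + 2 * A * (Rabs (p i - qs) * l1_except N p (sym_profile qs) i).
Proof.
  intros Hi Hp. pose proof (Nash_field_zero N C A M qs i Hi Hnash) as Hzero.
  assert (Hlip := cross_term_lipschitz N p (sym_profile qs) i Hi (in_box_cube N p Hp)
                    (in_box_cube N _ (proj1 Hnash))).
  destruct (Hp i Hi) as [Hp0 Hp1].
  rewrite <- (Rminus_0_r (field_explicit _ _ _ _ p i)), <- Hzero.
  unfold field_explicit. change (sym_profile qs i) with qs.
  set (d := cross_term N p i - cross_term N (sym_profile qs) i) in *.
  set (e := p i - qs).
  replace (e * (C / p i - M - A / (INR N - 1) * cross_term N p i
               - (C / qs - M - A / (INR N - 1) * cross_term N (sym_profile qs) i)))
    with (- (C / (p i * qs)) * e ^ 2 - A / (INR N - 1) * (e * d)) by (unfold e, d; field; lra).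
  assert (Hprivate : - (C / (p i * qs)) * e ^ 2 <= - (C / qs) * e ^ 2).
  { assert (C / qs <= C / (p i * qs)).
    { unfold Rdiv. apply Rmult_le_compat_l; [lra|]. apply Rinv_le_contravar; nra. }
    pose proof (pow2_ge_0 e). nra. }
  assert (Hcross : - (A / (INR N - 1) * (e * d)) <= 2 * A * (Rabs e * l1_except N p (sym_profile qs) i)).
  { assert (- (e * d) <= Rabs e * Rabs d).
    { rewrite <- Rabs_mult, <- Rabs_Ropp. apply Rle_abs. }
    assert (Rabs e * Rabs d <= Rabs e * (2 * (INR N - 1) * l1_except N p (sym_profile qs) i)).
    { apply Rmult_le_compat_l; [apply Rabs_pos|auto]. }
    replace (2 * A * (Rabs e * l1_except N p (sym_profile qs) i))
      with (A / (INR N - 1) * (Rabs e * (2 * (INR N - 1) * l1_except N p (sym_profile qs) i)))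
      by (field; lra).
    assert (0 <= A / (INR N - 1)) by (apply Rdiv_le_0_compat; lra).
    nra. }
  lra.
Qed.

Lemma field_dissipative p : in_box N p ->
  sum_upto N (fun i => (p i - qs) * field_explicit N C A M p i) <=
  - decay_rate N C A qs * sq_dist N qs p.
Proof.
  intros Hp. eapply Rle_trans.
  { apply (sum_upto_le _ _ (fun i => - (C / qs) * (p i - qs) ^ 2
             + 2 * A * (Rabs (p i - qs) * l1_except N p (sym_profile qs) i))).
    intros i Hi. apply field_coord_dissipative; auto. }
  rewrite sum_upto_plus, !sum_upto_scal_l.
  pose proof (sum_abs_cross_le N (fun k => p k - qs)) as Hcross.
  unfold l1_except, decay_rate, sq_dist, sym_profile.
  match type of Hcross with ?a <= ?b =>
    assert (2 * A * a <= 2 * A * b) by (apply Rmult_le_compat_l; lra) end.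
  lra.
Qed.

Definition clamp_radius : R := Rmin qs (1 - qs) / 2.

Lemma clamp_radius_pos : 0 < clamp_radius.
Proof. unfold clamp_radius. assert (0 < Rmin qs (1 - qs)) by (apply Rmin_glb_lt; lra). lra. Qed.

Lemma clamp_radius_in_box : 0 < qs - clamp_radius /\ qs + clamp_radius < 1.
Proof.
  pose proof clamp_radius_pos. unfold clamp_radius in *.
  pose proof (Rmin_l qs (1 - qs)). pose proof (Rmin_r qs (1 - qs)). lra.
Qed.

(* Evaluating the field at this projection makes it bounded and globally Lipschitz
   without changing it near qs. *)
Definition clamp (v : R) : R := Rmax (qs - clamp_radius) (Rmin (qs + clamp_radius) v).

Definition clamp_profile (q : nat -> R) : nat -> R := fun k => clamp (q k).

Definition clamped_field (q : nat -> R) (i : nat) : R :=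
  field_explicit N C A M (clamp_profile q) i.

Lemma clamp_cases v :
  (Rabs (v - qs) <= clamp_radius /\ clamp v = v) \/
  (qs + clamp_radius < v /\ clamp v = qs + clamp_radius) \/
  (v < qs - clamp_radius /\ clamp v = qs - clamp_radius).
Proof.
  pose proof clamp_radius_pos. unfold clamp.
  destruct (Rlt_le_dec (qs + clamp_radius) v); [|destruct (Rlt_le_dec v (qs - clamp_radius))].
  - right; left. rewrite Rmin_left, Rmax_right by lra. auto.
  - right; right. rewrite Rmin_right, Rmax_left by lra. auto.
  - left. rewrite Rmin_right, Rmax_right by lra. split; [apply Rabs_le; lra|auto].
Qed.

Lemma clamp_close v : Rabs (clamp v - qs) <= clamp_radius.
Proof.
  destruct (clamp_cases v) as [[H ->]|[[H ->]|[H ->]]]; auto;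
    pose proof clamp_radius_pos; apply Rabs_le; lra.
Qed.

Lemma clamp_id v : Rabs (v - qs) <= clamp_radius -> clamp v = v.
Proof.
  intros H. apply Rabs_le_between' in H.
  destruct (clamp_cases v) as [[_ E]|[[H' _]|[H' _]]]; auto; lra.
Qed.

Lemma clamp_lipschitz a b : Rabs (clamp a - clamp b) <= Rabs (a - b).
Proof. unfold clamp, Rmax, Rmin. repeat destruct Rle_dec; unfold Rabs; repeat destruct Rcase_abs; lra. Qed.

Lemma clamp_profile_box q : in_box N (clamp_profile q).
Proof.
  intros k _. pose proof (clamp_close (q k)). pose proof clamp_radius_in_box.
  apply Rabs_le_between' in H. unfold clamp_profile. lra.
Qed.

Lemma field_explicit_ext p q i : (i < N)%nat ->
  (forall k, (k < N)%nat -> p k = q k) ->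
  field_explicit N C A M p i = field_explicit N C A M q i.
Proof.
  intros Hi H. unfold field_explicit, cross_term, sum_except, alpha, gamma_excl.
  rewrite H by auto. do 2 f_equal. apply sum_upto_ext. intros j Hj.
  destruct (Nat.eqb j i); auto.
  f_equal; apply prod_upto_ext; intros k Hk; rewrite H by auto; auto.
Qed.

Lemma clamped_field_eq q i : (i < N)%nat ->
  (forall k, (k < N)%nat -> Rabs (q k - qs) <= clamp_radius) ->
  clamped_field q i = field_explicit N C A M q i.
Proof. intros Hi Hclose. apply field_explicit_ext; auto. intros k Hk. apply clamp_id; auto. Qed.

Lemma clamped_field_bounded q i : (i < N)%nat ->
  Rabs (clamped_field q i) <= C / (qs - clamp_radius) + M + A.
Proof.
  intros Hi. unfold clamped_field, field_explicit. set (c := clamp_profile q).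
  pose proof clamp_radius_in_box. pose proof (clamp_close (q i)) as Hci.
  apply Rabs_le_between' in Hci. change (clamp (q i)) with (c i) in Hci.
  destruct (cross_term_range N c i Hi (in_box_cube N c (clamp_profile_box q))) as [D0 D1].
  assert (C / c i <= C / (qs - clamp_radius)).
  { unfold Rdiv. apply Rmult_le_compat_l; [lra|]. apply Rinv_le_contravar; lra. }
  assert (0 < C / c i) by (apply Rdiv_lt_0_compat; lra).
  assert (0 <= A / (INR N - 1) * cross_term N c i <= A).
  { assert (0 <= A / (INR N - 1)) by (apply Rdiv_le_0_compat; lra). split; [nra|].
    replace A with (A / (INR N - 1) * (INR N - 1)) at 2 by (field; lra). nra. }
  unfold Rabs. destruct Rcase_abs; lra.
Qed.

Lemma clamped_field_lipschitz q p i : (i < N)%nat ->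
  Rabs (clamped_field q i - clamped_field p i) <=
  (C / (qs - clamp_radius) ^ 2 + 2 * A) * sum_upto N (fun k => Rabs (q k - p k)).
Proof.
  intros Hi. unfold clamped_field, field_explicit.
  set (c := clamp_profile q). set (c' := clamp_profile p).
  set (S := sum_upto N (fun k => Rabs (q k - p k))).
  pose proof clamp_radius_in_box.
  assert (HS : l1_except N c c' i <= S).
  { eapply Rle_trans; [apply sum_except_le_sum; intros; apply Rabs_pos|].
    apply sum_upto_le. intros k _. apply clamp_lipschitz. }
  assert (Hi1 : Rabs (c i - c' i) <= S).
  { eapply Rle_trans; [apply clamp_lipschitz|].
    apply (sum_upto_term_le N (fun k => Rabs (q k - p k))); auto. intros; apply Rabs_pos. }
  pose proof (cross_term_lipschitz N c c' i Hi (in_box_cube N c (clamp_profile_box q))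
                (in_box_cube N c' (clamp_profile_box p))) as HD.
  pose proof (clamp_close (q i)) as Hc. pose proof (clamp_close (p i)) as Hc'.
  apply Rabs_le_between' in Hc, Hc'.
  change (clamp (q i)) with (c i) in Hc. change (clamp (p i)) with (c' i) in Hc'.
  replace (C / c i - M - A / (INR N - 1) * cross_term N c i
           - (C / c' i - M - A / (INR N - 1) * cross_term N c' i))
    with (C * / (c i * c' i) * (c' i - c i)
          - A / (INR N - 1) * (cross_term N c i - cross_term N c' i)) by (field; lra).
  eapply Rle_trans; [apply Rabs_triang|]. rewrite Rabs_Ropp, !Rabs_mult.
  rewrite (Rabs_right C), (Rabs_right (/ _)), (Rabs_right (A / _)), Rabs_minus_sym.
  - assert (/ (c i * c' i) <= / (qs - clamp_radius) ^ 2) by (apply Rinv_le_contravar; nra).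
    assert (0 <= / (c i * c' i)) by (apply Rlt_le, Rinv_0_lt_compat; nra).
    assert (C * / (c i * c' i) * Rabs (c i - c' i) <= C / (qs - clamp_radius) ^ 2 * S).
    { pose proof (Rabs_pos (c i - c' i)). unfold Rdiv.
      rewrite Rmult_assoc, Rmult_assoc. apply Rmult_le_compat_l; [lra|]. nra. }
    assert (A / (INR N - 1) * Rabs (cross_term N c i - cross_term N c' i) <= 2 * A * S).
    { replace (2 * A * S) with (A / (INR N - 1) * (2 * (INR N - 1) * S)) by (field; lra).
      apply Rmult_le_compat_l; [apply Rdiv_le_0_compat; lra|].
      eapply Rle_trans; [exact HD|]. apply Rmult_le_compat_l; lra. }
    lra.
  - apply Rle_ge, Rdiv_le_0_compat; lra.
  - apply Rle_ge, Rlt_le, Rinv_0_lt_compat. nra.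
  - lra.
Qed.

Lemma field_points_inward p i : (i < N)%nat -> in_box N p ->
  (forall k, (k < N)%nat -> Rabs (p k - qs) <= clamp_radius) ->
  Rabs (p i - qs) = clamp_radius ->
  (p i - qs) * field_explicit N C A M p i < 0.
Proof.
  intros Hi Hp Hclose Hri.
  pose proof clamp_radius_pos. pose proof (decay_rate_pos N C A qs HC Hq Hgt) as Hk.
  assert (Hl1 : l1_except N p (sym_profile qs) i <= (INR N - 1) * clamp_radius).
  { rewrite <- (sum_except_const N i) by auto. apply sum_except_le.
    intros k Hk' _. apply Hclose; auto. }
  pose proof (field_coord_dissipative p i Hi Hp) as Hd.
  rewrite <- (pow2_abs (p i - qs)), Hri in Hd.
  assert (2 * A * (clamp_radius * l1_except N p (sym_profile qs) i)
          <= 2 * A * (INR N - 1) * clamp_radius ^ 2).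
  { replace (2 * A * (INR N - 1) * clamp_radius ^ 2)
      with (2 * A * (clamp_radius * ((INR N - 1) * clamp_radius))) by ring.
    apply Rmult_le_compat_l; [lra|]. apply Rmult_le_compat_l; lra. }
  assert (0 < decay_rate N C A qs * clamp_radius ^ 2) by (apply Rmult_lt_0_compat; nra).
  unfold decay_rate in *. nra.
Qed.

(* Where the clamp is active, q_i - qs is a larger multiple of clamp q_i - qs and the
   clamped field points inward. *)
Lemma clamped_field_coord_le q i : (i < N)%nat ->
  (q i - qs) * clamped_field q i <= (clamp (q i) - qs) * clamped_field q i.
Proof.
  intros Hi. pose proof clamp_radius_pos.
  assert (Hin : (clamp (q i) - qs) * clamped_field q i < 0 \/ clamp (q i) = q i).
  { destruct (clamp_cases (q i)) as [[_ E]|[[_ E]|[_ E]]]; [right; auto|left..];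
      apply (field_points_inward (clamp_profile q) i Hi (clamp_profile_box q));
      try (intros k _; apply clamp_close); unfold clamp_profile; rewrite E;
      [rewrite Rplus_minus_l|replace (qs - clamp_radius - qs) with (- clamp_radius) by ring;
                               rewrite Rabs_Ropp]; apply Rabs_right; lra. }
  destruct Hin as [Hneg|Heq]; [|rewrite Heq; lra].
  destruct (clamp_cases (q i)) as [[_ E]|[[Hv E]|[Hv E]]]; rewrite E in *; [lra| |]; nra.
Qed.

Lemma clamped_field_dissipative q :
  sum_upto N (fun i => (q i - qs) * clamped_field q i) <= 0.
Proof.
  eapply Rle_trans; [apply sum_upto_le; intros i Hi; apply clamped_field_coord_le; auto|].
  eapply Rle_trans; [apply (field_dissipative (clamp_profile q) (clamp_profile_box q))|].
  pose proof (decay_rate_pos N C A qs HC Hq Hgt). pose proof (sq_dist_nonneg N qs (clamp_profile q)).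
  nra.
Qed.

Lemma solution_sq_dist_decay x T : is_solution N (field N C A M) x T ->
  forall t, 0 <= t -> Rbar_lt t T ->
  sq_dist N qs (x t) * exp (2 * decay_rate N C A qs * t) <= sq_dist N qs (x 0).
Proof.
  intros [Hbox Hsol].
  apply (sq_dist_exp_decay N qs x (fun t => field N C A M (x t)) T).
  - intros i Hi. apply Hsol; auto.
  - intros t Ht HT i Hi. apply Hsol; auto.
  - intros t Ht HT. assert (Hxt : in_box N (x t)) by (apply Hbox; auto; lra).
    rewrite (sum_upto_ext N _ (fun i => (x t i - qs) * field_explicit N C A M (x t) i)).
    + apply field_dissipative; auto.
    + intros i Hi. rewrite field_eq; auto.
Qed.

Lemma solution_sq_dist_le x T : is_solution N (field N C A M) x T ->
  forall t, 0 <= t -> Rbar_lt t T -> sq_dist N qs (x t) <= sq_dist N qs (x 0).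
Proof.
  intros Hx t Ht HT. pose proof (solution_sq_dist_decay x T Hx t Ht HT).
  pose proof (decay_rate_pos N C A qs HC Hq Hgt).
  assert (1 <= exp (2 * decay_rate N C A qs * t)).
  { pose proof (exp_ineq1_le (2 * decay_rate N C A qs * t)). nra. }
  pose proof (sq_dist_nonneg N qs (x t)). nra.
Qed.

Let clamped_field_bound_nonneg : 0 <= C / (qs - clamp_radius) + M + A.
Proof.
  pose proof clamp_radius_in_box.
  assert (0 < C / (qs - clamp_radius)) by (apply Rdiv_lt_0_compat; lra). lra.
Qed.

Let clamped_field_lipschitz_nonneg : 0 <= C / (qs - clamp_radius) ^ 2 + 2 * A.
Proof.
  pose proof clamp_radius_in_box.
  assert (0 < C / (qs - clamp_radius) ^ 2) by (apply Rdiv_lt_0_compat; [lra|apply pow_lt; lra]).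
  lra.
Qed.

Definition clamped_solution (x0 : nat -> R) : R -> nat -> R :=
  picard_limit clamped_field x0.

Lemma clamped_solution_continuous x0 i : (i < N)%nat ->
  forall s, continuous (fun t => clamped_solution x0 t i) s.
Proof.
  apply (picard_limit_continuous N _ (C / (qs - clamp_radius) + M + A)
           (C / (qs - clamp_radius) ^ 2 + 2 * A)); auto.
  - intros; apply clamped_field_bounded; auto.
  - intros; apply clamped_field_lipschitz; auto.
Qed.

Lemma is_derive_clamped_solution x0 t i : 0 < t -> (i < N)%nat ->
  is_derive (fun s => clamped_solution x0 s i) t (clamped_field (clamped_solution x0 t) i).
Proof.
  intros Ht Hi.
  apply (is_derive_picard_limit N _ (C / (qs - clamp_radius) + M + A)
           (C / (qs - clamp_radius) ^ 2 + 2 * A)); auto.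
  - intros; apply clamped_field_bounded; auto.
  - intros; apply clamped_field_lipschitz; auto.
Qed.

Lemma clamped_solution_close x0 : sq_dist N qs x0 < clamp_radius ^ 2 ->
  forall t, 0 <= t -> forall i, (i < N)%nat -> Rabs (clamped_solution x0 t i - qs) < clamp_radius.
Proof.
  intros Hx0 t Ht i Hi. pose proof clamp_radius_pos. set (y := clamped_solution x0).
  assert (HW0 : sq_dist N qs (y 0) = sq_dist N qs x0)
    by (apply sum_upto_ext; intros; unfold y, clamped_solution; rewrite picard_limit_0; auto).
  assert (Hdecay : sq_dist N qs (y t) * exp (2 * 0 * t) <= sq_dist N qs (y 0)).
  { refine (sq_dist_exp_decay N qs y (fun t => clamped_field (y t)) p_infty 0 _ _ _ t Ht I).
    - intros j Hj. apply continuous_at_right, clamped_solution_continuous; auto.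
    - intros s Hs _ j Hj. apply is_derive_clamped_solution; auto.
    - intros s _ _. rewrite Ropp_0, Rmult_0_l. apply clamped_field_dissipative. }
  rewrite Rmult_0_r, Rmult_0_l, exp_0, Rmult_1_r, HW0 in Hdecay.
  apply (sq_dist_coord N); auto. lra.
Qed.

(* Near qs the clamp is the identity, so the clamped solution solves the original dynamics. *)
Lemma solution_exists_near x0 : sq_dist N qs x0 < clamp_radius ^ 2 ->
  exists x, is_solution N (field N C A M) x p_infty /\ forall i, (i < N)%nat -> x 0 i = x0 i.
Proof.
  intros Hx0. pose proof clamp_radius_in_box.
  pose proof (clamped_solution_close x0 Hx0) as Hclose.
  assert (Hbox : forall t, 0 <= t -> in_box N (clamped_solution x0 t)).
  { intros t Ht k Hk. specialize (Hclose t Ht k Hk). apply Rabs_lt_between' in Hclose. lra. }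
  exists (clamped_solution x0). split; [split|intros; apply picard_limit_0].
  - intros t Ht _. auto.
  - intros i Hi. split.
    + apply continuous_at_right, clamped_solution_continuous; auto.
    + intros t Ht _. rewrite field_eq by (try apply Hbox; auto; lra).
      rewrite <- clamped_field_eq by (auto; intros k Hk; apply Rlt_le, Hclose; auto; lra).
      apply is_derive_clamped_solution; auto.
Qed.

Lemma sym_lyap_stable : lyap_stable N (field N C A M) (sym_profile qs).
Proof.
  intros eps Heps. pose proof clamp_radius_pos.
  set (m := Rmin eps clamp_radius).
  assert (Hm : 0 < m) by (apply Rmin_glb_lt; lra).
  assert (m <= eps) by apply Rmin_l. assert (m <= clamp_radius) by apply Rmin_r.
  assert (HNpos : 1 < INR N) by lra.
  exists (m / INR N). split; [apply Rdiv_lt_0_compat; lra|].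
  assert (Hsmall : forall q, near_lt N q (sym_profile qs) (m / INR N) -> sq_dist N qs q < m ^ 2).
  { intros q Hq'. eapply Rle_lt_trans; [apply sq_dist_le, Hq'|].
    replace (INR N * (m / INR N) ^ 2) with (m ^ 2 / INR N) by (field; lra).
    apply Rmult_lt_reg_r with (INR N); [lra|].
    unfold Rdiv. rewrite Rmult_assoc, Rinv_l by lra. nra. }
  split.
  - intros x0 Hx0. apply solution_exists_near.
    eapply Rlt_le_trans; [apply Hsmall, Hx0|]. apply pow_incr. lra.
  - intros T x Hx Hx0 t Ht HT i Hi. apply (Rlt_le_trans _ m); auto.
    apply (sq_dist_coord N); auto.
    eapply Rle_lt_trans; [apply (solution_sq_dist_le x T)|apply Hsmall]; auto.
Qed.

Lemma solution_converges x : is_solution N (field N C A M) x p_infty ->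
  forall i, (i < N)%nat -> is_lim (fun t => x t i) p_infty qs.
Proof.
  intros Hx i Hi P [eps HP]. pose proof (cond_pos eps) as He.
  pose proof (decay_rate_pos N C A qs HC Hq Hgt) as Hk. set (k := decay_rate N C A qs) in *.
  assert (He2 : 0 < eps ^ 2) by (apply pow_lt; auto).
  set (W0 := sq_dist N qs (x 0)). pose proof (sq_dist_nonneg N qs (x 0)) as HW0.
  exists (W0 / (eps ^ 2 * (2 * k))). intros t Ht.
  assert (H0 : 0 <= W0 / (eps ^ 2 * (2 * k)))
    by (apply Rdiv_le_0_compat; [auto|]; apply Rmult_lt_0_compat; lra).
  apply HP. change (Rabs (x t i - qs) < eps). apply (sq_dist_coord N); auto.
  pose proof (solution_sq_dist_decay x p_infty Hx t ltac:(lra) I) as Hdecay. fold k W0 in Hdecay.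
  (* exp (2 k t) > 2 k t > W0 / eps^2 *)
  pose proof (exp_ineq1 (2 * k * t) ltac:(nra)) as Hexp.
  assert (W0 < eps ^ 2 * (2 * k * t)).
  { apply (Rmult_lt_reg_r (/ (eps ^ 2 * (2 * k)))).
    - apply Rinv_0_lt_compat, Rmult_lt_0_compat; lra.
    - replace (eps ^ 2 * (2 * k * t) * / (eps ^ 2 * (2 * k))) with t by (field; lra).
      unfold Rdiv in Ht. lra. }
  pose proof (sq_dist_nonneg N qs (x t)).
  apply (Rmult_lt_reg_r (exp (2 * k * t))); [apply exp_pos|]. nra.
Qed.

End SymmetricEquilibrium.

Theorem proposition2 (N : nat) (C A M qs : R) :
  (2 <= N)%nat -> 0 < C -> 0 < M -> 0 <= A ->
  0 < qs < 1 ->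
  is_Nash N C A M (sym_profile qs) ->
  C > 2 * (INR N - 1) * A ->
  loc_asympt_stable N (field N C A M) (sym_profile qs).
Proof.
  intros HN HC HM HA Hq Hnash Hgt. split.
  - apply sym_lyap_stable; auto.
  - exists 1. split; [lra|]. intros x Hx _.
    apply (solution_converges N C A M qs); auto.
Qed.
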